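(* Consider the algorithm described in the context for solving the problem there, and let the problem assumption and the random-sample assumption hold. Define the auxiliary stochastic sequence $\{u_k\}$ by $u_0:=x_0$ and $$u_{k+1}\triangleq \mathcal{P}_X\left(u_k+N^{-1}\gamma_k({w}_{f,k}+e_{f,k}+\rho_k{w}_{F,k}+\rho_k{e}_{F,k})\right).$$ Then for any $y \in X$ and $k \geq 0$, \begin{align*} & (\gamma_k\rho_k)^rF(y)^T(y_{k+1}-y) + (\gamma_k\rho_k)^{r}\rho_k^{-1}(f(y_{k+1})-f(y)) \\ & \leq 0.5N(\gamma_k\rho_k)^{r-1}\left(\|x_k-y\|^2 -\|x_{k+1}-y\|^2+\|u_k-y\|^2-\|u_{k+1}-y\|^2\right) \\ &+2N^{-1}(\gamma_k\rho_k)^{r+1}\rho_k^{-2}\left(6C_f^2+3\|\tilde{w}_{f,k}\|^2+3\|\tilde{e}_{f,k}\|^2+4\|{w}_{f,k}\|^2+4\|e_{f,k}\|^2\right) \\ &+2N^{-1}(\gamma_k\rho_k)^{r+1}\left(6C_F^2+3\|\tilde{w}_{F,k}\|^2+3\|\tilde{e}_{F,k}\|^2+4\|{w}_{F,k}\|^2+4\|{e}_{F,k}\|^2\right) \\ &+\gamma_k^r\rho_k^{r-1}\left({w}_{f,k}+e_{f,k}+\rho_k{w}_{F,k}+\rho_k{e}_{F,k}\right)^T(u_k-y_{k+1}). \end{align*}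
   Context: Setting: $N\ge1$, positive integers $n_1,\dots,n_N$ with $n=\sum_i n_i$, sets $X_i\subseteq\mathbb R^{n_i}$, $X=\prod_{i=1}^N X_i$; $\mathcal P_X,\mathcal P_{X_i}$ are Euclidean projections. $\xi$ is a random vector on $(\Omega,\mathcal F,\mathbb P)$ with values in $\mathbb R^d$. $f:\mathbb R^n\times\mathbb R^d\to\mathbb R$, $F=(F_1,\dots,F_N):\mathbb R^n\times\mathbb R^d\to\mathbb R^n$ with $F_i$ valued in $\mathbb R^{n_i}$; $f(x):=\mathbb E[f(x,\xi)]$, $F(x):=\mathbb E[F(x,\xi)]$. Problem: minimize $f(x)$ subject to $x\in\mathrm{SOL}(X,F):=\{x\in X:(z-x)^TF(x)\ge0\ \forall z\in X\}$. $\tilde\nabla f(x)$ denotes a subgradient of $f$ at $x$ and $\tilde\nabla f(x,\xi)$ a stochastic subgradient; subscript $i$ denotes the $i$-th block. $\mathbf U_\ell\in\mathbb R^{n\times n_\ell}$ with $[\mathbf U_1,\dots,\mathbf U_N]=\mathbf I_n$. Problem assumption: (i) $F(\cdot)$ is single-valued, continuous and monotone on its domain; (ii) $f(\cdot)$ is real-valued and convex on its domain; (iii) $X\subseteq\mathrm{int}(\mathrm{dom}(F)\cap\mathrm{dom}(f))$ is nonempty, compact and convex (each $X_i$ closed convex). $C_F,C_f>0$ are constants with $\|F(x)\|\le C_F$ and $\|\tilde\nabla f(x)\|\le C_f$ for all $\tilde\nabla f(x)\in\partial f(x)$, $x\in X$. Algorithm: given $x_0,y_0\in X$, positive sequences $\{\gamma_k\},\{\rho_k\}$,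 a scalar $r<1$; for $k=0,1,\dots$: draw $i_k,\tilde i_k$ uniformly from $\{1,\dots,N\}$ and realizations $\xi_k,\tilde\xi_k$ of $\xi$; $y_{k+1}^{(i)}=\mathcal P_{X_i}\big(x_k^{(i)}-\gamma_k(\tilde\nabla_i f(x_k,\tilde\xi_k)+\rho_kF_i(x_k,\tilde\xi_k))\big)$ if $i=\tilde i_k$, else $y_{k+1}^{(i)}=x_k^{(i)}$; $x_{k+1}^{(i)}=\mathcal P_{X_i}\big(x_k^{(i)}-\gamma_k(\tilde\nabla_i f(y_{k+1},\xi_k)+\rho_kF_i(y_{k+1},\xi_k))\big)$ if $i=i_k$, else $x_{k+1}^{(i)}=x_k^{(i)}$. Errors: $\tilde w_{F,k}=F(x_k,\tilde\xi_k)-F(x_k)$, $\tilde w_{f,k}=\tilde\nabla f(x_k,\tilde\xi_k)-\tilde\nabla f(x_k)$, $w_{F,k}=F(y_{k+1},\xi_k)-F(y_{k+1})$, $w_{f,k}=\tilde\nabla f(y_{k+1},\xi_k)-\tilde\nabla f(y_{k+1})$, $\tilde e_{F,k}=N\mathbf U_{\tilde i_k}F_{\tilde i_k}(x_k,\tilde\xi_k)-F(x_k,\tilde\xi_k)$, $\tilde e_{f,k}=N\mathbf U_{\tilde i_k}\tilde\nabla_{\tilde i_k}f(x_k,\tilde\xi_k)-\tilde\nabla f(x_k,\tilde\xi_k)$, $e_{F,k}=N\mathbf U_{i_k}F_{i_k}(y_{k+1},\xi_k)-F(y_{k+1},\xi_k)$, $e_{f,k}=N\mathbf U_{i_k}\tilde\nabla_{i_k}f(y_{k+1},\xi_k)-\tilde\nabla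 f(y_{k+1},\xi_k)$. Random-sample assumption: (a) the $\tilde\xi_k,\xi_k$ are i.i.d. copies of $\xi$, the $\tilde i_k,i_k$ i.i.d. uniform on $\{1,\dots,N\}$, all mutually independent; (b) $F(\cdot,\tilde\xi_k)$, $F(\cdot,\xi_k)$ are unbiased for $F(\cdot)$ and $\tilde\nabla f(\cdot,\tilde\xi_k)$, $\tilde\nabla f(\cdot,\xi_k)$ unbiased for $\tilde\nabla f(\cdot)$; (c) there exist $\nu_F,\nu_f>0$ with $\mathbb E[\|F(x,\xi)-F(x)\|^2\mid x]\le\nu_F^2$ and $\mathbb E[\|\tilde\nabla f(x,\xi)-\tilde\nabla f(x)\|^2\mid x]\le\nu_f^2$. *)

From mathcomp Require Import all_boot all_order all_algebra.
From mathcomp Require Import boolp classical_sets functions reals exp.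
Set Implicit Arguments. Unset Strict Implicit. Unset Printing Implicit Defensive.
Import Order.TTheory GRing.Theory Num.Theory.
Local Open Scope ring_scope.
Local Open Scope classical_set_scope.

Section Euclid.
Variables (R : realType) (I : finType).
Definition dotp (x y : I -> R) : R := \sum_(t : I) x t * y t.
Definition nsq (x : I -> R) : R := dotp x x.
Definition nrm (x : I -> R) : R := Num.sqrt (nsq x).

Definition is_proj (C : set (I -> R)) (x p : I -> R) : Prop :=
  C p /\ forall z, C z -> nrm (x - p) <= nrm (x - z).

Definition cvxc (t : R) (x y : I -> R) : I -> R := fun s => t * x s + (1 - t) * y s.
Definition scl (a : R) (x : I -> R) : I -> R := fun s => a * x s.
Definition convex_set (C : set (I -> R)) : Prop :=
  forall x y (t : R), C x -> C y -> 0 <= t <= 1 -> C (cvxc t x y).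
Definition closed_set (C : set (I -> R)) : Prop :=
  forall x, (forall e : R, 0 < e -> exists z, C z /\ nrm (z - x) < e) -> C x.
Definition bounded_set (C : set (I -> R)) : Prop :=
  exists M : R, forall x, C x -> nrm x <= M.
(* compactness in the finite-dimensional space R^I (Heine-Borel) *)
Definition compact_set (C : set (I -> R)) : Prop := closed_set C /\ bounded_set C.
Definition interior_of (D : set (I -> R)) : set (I -> R) :=
  fun x => exists r : R, 0 < r /\ forall z, nrm (z - x) < r -> D z.

Definition continuous_on (D : set (I -> R)) (F : (I -> R) -> (I -> R)) : Prop :=
  forall x, D x -> forall e : R, 0 < e -> exists d : R, 0 < d /\
    forall z, D z -> nrm (z - x) < d -> nrm (F z - F x) < e.
Definition monotone_on (D : set (I -> R)) (F : (I -> R) -> (I -> R)) : Prop :=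
  forall x y, D x -> D y -> 0 <= dotp (F x - F y) (x - y).
Definition convex_on (D : set (I -> R)) (f : (I -> R) -> R) : Prop :=
  forall x y (t : R), D x -> D y -> 0 <= t <= 1 ->
    D (cvxc t x y) /\
    f (cvxc t x y) <= t * f x + (1 - t) * f y.
Definition subgrad (D : set (I -> R)) (f : (I -> R) -> R) (x g : I -> R) : Prop :=
  forall z, D z -> f x + dotp g (z - x) <= f z.
End Euclid.

(* Block structure: N blocks of sizes ns i; R^n with n = sum_i ns i is
   represented as functions on the finite type of pairs (i, j), j < ns i. *)
Definition bidx (N : nat) (ns : 'I_N -> nat) : finType :=
  {i : 'I_N & 'I_(ns i)}.

Section Blocks.
Variables (R : realType) (N : nat) (ns : 'I_N -> nat).
Local Notation V := (bidx ns -> R).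
Definition blk (i : 'I_N) (x : V) : 'I_(ns i) -> R :=
  fun j => x (Tagged (fun i => 'I_(ns i)) j).
(* U_i x^(i) : keep block i of x, zero elsewhere *)
Definition blkmask (i : 'I_N) (x : V) : V :=
  fun t => if tag t == i then x t else 0.


Definition prodset (Xb : forall i : 'I_N, set ('I_(ns i) -> R)) : set V :=
  fun x => forall i, Xb i (@blk i x).
End Blocks.
Arguments blk {R N ns} i x _.
Arguments blkmask {R N ns} i x _.

From mathcomp Require Import all_boot all_order all_algebra.
From mathcomp Require Import boolp classical_sets functions reals exp.
From mathcomp Require Import ring lra.
Import Order.TTheory GRing.Theory Num.Theory.
Local Open Scope ring_scope.
Local Open Scope classical_set_scope.

(* Both half-steps of the method are block projections, i.e. projections onto
   X = prod_i X_i of x_k - gam U_i (direction), so each satisfies the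
   variational inequality of a projection.  Combined as in the analysis of the
   extragradient method they give
     |x_{k+1} - z|^2 <= |x_k - z|^2 - 2 c D.(y_{k+1} - z) + c^2 |Dt - D|^2,
   with c = gam / N and D, Dt the block estimates N U_i (...) at y_{k+1} and
   x_k, written as true direction plus noise.  The noise part v of D is
   absorbed by the projection step defining u_{k+1}, up to v.(u_k - y_{k+1});
   the true part is bounded below by convexity of f and monotonicity of F.
   Bounding |Dt - D|^2 and |v|^2 by C_f, C_F and the noise norms and
   multiplying by (gam rho)^r / (2 c rho) gives the claim. *)

Lemma sqrD_le2 (R : realFieldType) (a b : R) :
  (a + b) ^+ 2 <= 2 * (a ^+ 2 + b ^+ 2).
Proof. by have := sqr_ge0 (a - b); nra. Qed.

Lemma sqrD3_le3 (R : realFieldType) (a b c : R) :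
  (a + b + c) ^+ 2 <= 3 * (a ^+ 2 + b ^+ 2 + c ^+ 2).
Proof.
by have := sqr_ge0 (a - b); have := sqr_ge0 (b - c); have := sqr_ge0 (a - c); nra.
Qed.

Section Euclid.
Context {R : realType} {I : finType}.
Implicit Types (a b c p u v z g F w e wF eF : I -> R) (t rh : R).

Lemma dotpDl a b c : dotp (a + b) c = dotp a c + dotp b c.
Proof. by rewrite /dotp -big_split; apply: eq_bigr => s _; rewrite mulrDl. Qed.

Lemma dotpBl a b c : dotp (a - b) c = dotp a c - dotp b c.
Proof. by rewrite /dotp -sumrB; apply: eq_bigr => s _; rewrite mulrBl. Qed.

Lemma dotpBr a b c : dotp a (b - c) = dotp a b - dotp a c.
Proof. by rewrite /dotp -sumrB; apply: eq_bigr => s _; rewrite mulrBr. Qed.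

Lemma dotpZl t a b : dotp (scl t a) b = t * dotp a b.
Proof. by rewrite /dotp mulr_sumr; apply: eq_bigr => s _; rewrite mulrA. Qed.

Lemma nsq_ge0 a : 0 <= nsq a.
Proof. by apply: sumr_ge0 => s _; rewrite -expr2 sqr_ge0. Qed.

Lemma nsqZ t a : nsq (scl t a) = t ^+ 2 * nsq a.
Proof.
rewrite /nsq /dotp mulr_sumr; apply: eq_bigr => s _.
by rewrite /scl mulrACA -expr2.
Qed.

Lemma nsqD_le2 a b : nsq (a + b) <= 2 * (nsq a + nsq b).
Proof.
rewrite /nsq /dotp -big_split mulr_sumr; apply: ler_sum => s _.
by rewrite -!expr2; apply: sqrD_le2.
Qed.

Lemma nsqB_le2 a b : nsq (a - b) <= 2 * (nsq a + nsq b).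
Proof.
have -> : nsq b = nsq (- b) by apply: eq_bigr => s _; rewrite mulrNN.
exact: nsqD_le2.
Qed.

Lemma nsqD3_le3 a b c : nsq (a + b + c) <= 3 * (nsq a + nsq b + nsq c).
Proof.
rewrite /nsq /dotp -!big_split mulr_sumr; apply: ler_sum => s _.
by rewrite -!expr2; apply: sqrD3_le3.
Qed.

Lemma nsq_noise_le w e wF eF rh :
  nsq (w + e + scl rh wF + scl rh eF)
  <= 4 * (nsq w + nsq e) + 4 * rh ^+ 2 * (nsq wF + nsq eF).
Proof.
rewrite (_ : _ + _ = (w + e) + scl rh (wF + eF)); last first.
  by apply/funext => s; rewrite /scl !fctE /=; ring.
apply: le_trans (nsqD_le2 _ _) _; rewrite nsqZ.
have := nsqD_le2 w e; have := ler_wpM2l (sqr_ge0 rh) (nsqD_le2 wF eF); lra.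
Qed.

Lemma nsq_direction_le g F w e wF eF rh :
  nsq (g + scl rh F + (w + e + scl rh wF + scl rh eF))
  <= 6 * (nsq g + nsq w + nsq e) + 6 * rh ^+ 2 * (nsq F + nsq wF + nsq eF).
Proof.
rewrite (_ : _ + _ = (g + w + e) + scl rh (F + wF + eF)); last first.
  by apply/funext => s; rewrite /scl !fctE /=; ring.
apply: le_trans (nsqD_le2 _ _) _; rewrite nsqZ.
have := nsqD3_le3 g w e; have := ler_wpM2l (sqr_ge0 rh) (nsqD3_le3 F wF eF); lra.
Qed.

Lemma nsq_le_sqr {a t} : nrm a <= t -> nsq a <= t ^+ 2.
Proof.
move=> le_at; have t_ge0 : 0 <= t := le_trans (sqrtr_ge0 _) le_at.
by rewrite -(sqr_sqrtr (nsq_ge0 a)) lerXn2r // nnegrE sqrtr_ge0.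
Qed.

Lemma interior_ofW {D : set (I -> R)} : interior_of D `<=` D.
Proof.
move=> x [e [e_gt0 De]]; apply: De.
by rewrite subrr /nrm /nsq /dotp big1 ?sqrtr0 // => s _; rewrite /= mulr0.
Qed.

(* If the angle were acute, moving p towards z by t = m / (m + |z - p|^2)
   would bring it closer to a. *)
Lemma is_proj_vi {C : set (I -> R)} {a p z} :
  convex_set C -> is_proj C a p -> C z -> dotp (a - p) (z - p) <= 0.
Proof.
move=> C_cvx [Cp p_min] Cz; set m := dotp (a - p) (z - p).
have M_ge0 := nsq_ge0 (z - p); set M := nsq (z - p) in M_ge0.
rewrite leNgt; apply/negP => m_gt0.
pose t := m / (m + M).
have t_gt0 : 0 < t by rewrite divr_gt0 //; lra.
have t_le1 : t <= 1 by rewrite ler_pdivrMr; lra.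
have tM : t * M = m - t * m.
  have tmM : t * (m + M) = m by rewrite /t mulrVK // unitfE; lra.
  by rewrite mulrDr in tmM; lra.
have expand : nsq (a - cvxc t z p) = nsq (a - p) - 2 * t * m + t ^+ 2 * M.
  rewrite /nsq /m /M /dotp !mulr_sumr -sumrB -big_split.
  by apply: eq_bigr => s _; rewrite /cvxc !fctE /=; ring.
have := p_min _ (C_cvx z p t Cz Cp (introT andP (conj (ltW t_gt0) t_le1))).
rewrite /nrm ler_sqrt ?nsq_ge0 // expand expr2 -[t * t * M]mulrA tM.
have := mulr_gt0 t_gt0 m_gt0; have := mulr_gt0 t_gt0 (mulr_gt0 t_gt0 m_gt0); nra.
Qed.

Lemma proj_step_dist_le {u v u1 z t} :
  dotp (u + scl t v - u1) (z - u1) <= 0 ->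
  nsq (u1 - z) <= nsq (u - z) + 2 * t * dotp v (u - z) + t ^+ 2 * nsq v.
Proof.
move=> vi; suff : 0 <= nsq (u - z) + 2 * t * dotp v (u - z) + t ^+ 2 * nsq v
  - nsq (u1 - z) + 2 * dotp (u + scl t v - u1) (z - u1) by lra.
rewrite /nsq /dotp !mulr_sumr -!sumrN -!big_split; apply: sumr_ge0 => s _ /=.
rewrite /scl !fctE /= (_ : _ + _ = (u s + t * v s - u1 s) ^+ 2) ?sqr_ge0 //.
ring.
Qed.

(* Coordinatewise, the slack is |xk - y1|^2 + |t (Dt - D) - (x1 - y1)|^2. *)
Lemma extragradient_dist_le {xk y1 x1 z Dt D t} :
  dotp (xk - scl t Dt - y1) (x1 - y1) <= 0 ->
  dotp (xk - scl t D - x1) (z - x1) <= 0 ->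
  nsq (x1 - z) <= nsq (xk - z) - 2 * t * dotp D (y1 - z) + t ^+ 2 * nsq (Dt - D).
Proof.
move=> vi_y vi_x.
suff : 0 <= nsq (xk - z) - 2 * t * dotp D (y1 - z) + t ^+ 2 * nsq (Dt - D)
  - nsq (x1 - z) + 2 * dotp (xk - scl t Dt - y1) (x1 - y1)
  + 2 * dotp (xk - scl t D - x1) (z - x1) by lra.
rewrite /nsq /dotp !mulr_sumr -!sumrN -!big_split; apply: sumr_ge0 => s _ /=.
rewrite /scl !fctE /=.
rewrite (_ : _ + _
  = (xk s - y1 s) ^+ 2 + (t * Dt s - t * D s - x1 s + y1 s) ^+ 2).
  by rewrite addr_ge0 ?sqr_ge0.
ring.
Qed.

End Euclid.

Section Blocks.
Context {R : realType} {N : nat} {ns : 'I_N -> nat}.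
Local Notation V := (bidx ns -> R).
Local Notation tagged i j := (Tagged (fun i => 'I_(ns i)) j).
Implicit Types (a b xk xn z G : V).

Lemma dotp_blk a b : dotp a b = \sum_i dotp (blk i a) (blk i b).
Proof.
rewrite /dotp (sig_big_dep (fun _ => true) (fun _ _ => true)
  (fun i j => a (tagged i j) * b (tagged i j))).
by apply: eq_big => // -[i j].
Qed.

Definition block_step (Xb : forall i : 'I_N, set ('I_(ns i) -> R))
    (i0 : 'I_N) (gm : R) xk G xn : Prop :=
  forall i, if i == i0 then is_proj (Xb i) (blk i (xk - scl gm G)) (blk i xn)
            else blk i xn = blk i xk.

Context {Xb : forall i : 'I_N, set ('I_(ns i) -> R)}.

Lemma block_step_mem {i0 : 'I_N} {gm xk G xn} :
  block_step Xb i0 gm xk G xn -> prodset Xb xk -> prodset Xb xn.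
Proof.
move=> step Xxk i; have := step i.
by case: (i == i0) => [[]|->] //; apply: Xxk.
Qed.

(* A block step is the projection of xk - gm U_i0 G onto X = prod_i X_i. *)
Lemma block_step_vi {i0 : 'I_N} {gm xk G xn z} :
  (forall i, convex_set (Xb i)) -> block_step Xb i0 gm xk G xn -> prodset Xb z ->
  dotp (xk - scl gm (blkmask i0 G) - xn) (z - xn) <= 0.
Proof.
move=> Xb_cvx step Xz; rewrite dotp_blk; apply: sumr_le0 => i _.
have := step i; case: eqP => [-> | ne_i] step_i.
  suff -> : blk i0 (xk - scl gm (blkmask i0 G) - xn)
            = blk i0 (xk - scl gm G) - blk i0 xn.
    exact: is_proj_vi (Xb_cvx i0) step_i (Xz i0).
  by apply/funext => j; rewrite /blk /blkmask /scl !fctE /= eqxx.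
rewrite /dotp big1 // => j _.
have := congr1 (fun h => h j) step_i; rewrite /blk /blkmask /scl !fctE /= => ->.
by rewrite (introF eqP ne_i) mulr0 subr0 subrr mul0r.
Qed.

(* The errors telescope: g + w_f + e_f = N U_i gs, and likewise for F. *)
Lemma corrected_direction (i0 : 'I_N) (gm rh : R) (g F gs Fs : V) :
  (0 < N)%N ->
  scl (N%:R^-1 * gm) (g + scl rh F
    + ((gs - g) + (scl N%:R (blkmask i0 gs) - gs)
       + scl rh (Fs - F) + scl rh (scl N%:R (blkmask i0 Fs) - Fs)))
  = scl gm (blkmask i0 (gs + scl rh Fs)).
Proof.
move=> N_gt0; have N_neq0 : (N%:R : R) != 0 by rewrite pnatr_eq0 -lt0n.
apply/funext => t; rewrite /blkmask /scl !fctE /=.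
by case: ifP => _; field.
Qed.

End Blocks.

Section ExtragradientStep.
Context {R : realType} {I : finType}.
Context {c rh Cf CF fy fz : R} {z xk y1 x1 uk u1 gx gy Fx Fy Fz : I -> R}.
Context {wft eft wFt eFt wf ef wF eF : I -> R}.
(* In the theorem c = gam / N, D and Dt are the block estimates at y_{k+1}
   and x_k split as true direction plus noise, and v drives u. *)
Local Notation v := (wf + ef + scl rh wF + scl rh eF).
Local Notation D := (gy + scl rh Fy + v).
Local Notation Dt := (gx + scl rh Fx + (wft + eft + scl rh wFt + scl rh eFt)).
Local Notation Sf :=
  (6 * Cf ^+ 2 + 3 * nsq wft + 3 * nsq eft + 4 * nsq wf + 4 * nsq ef).
Local Notation SF :=
  (6 * CF ^+ 2 + 3 * nsq wFt + 3 * nsq eFt + 4 * nsq wF + 4 * nsq eF).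
Hypotheses (c_gt0 : 0 < c) (rh_ge0 : 0 <= rh).
Hypothesis y_step : dotp (xk - scl c Dt - y1) (x1 - y1) <= 0.
Hypothesis x_step : dotp (xk - scl c D - x1) (z - x1) <= 0.
Hypothesis u_step : dotp (uk + scl c v - u1) (z - u1) <= 0.
Hypothesis gy_subgrad : fy + dotp gy (z - y1) <= fz.
Hypothesis F_monotone : 0 <= dotp (Fy - Fz) (y1 - z).
Hypotheses (gx_le : nsq gx <= Cf ^+ 2) (gy_le : nsq gy <= Cf ^+ 2).
Hypotheses (Fx_le : nsq Fx <= CF ^+ 2) (Fy_le : nsq Fy <= CF ^+ 2).

Lemma direction_lower_bound :
  rh * dotp Fz (y1 - z) + (fy - fz) + dotp v (uk - z) - dotp v (uk - y1)
  <= dotp D (y1 - z).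
Proof.
have := mulr_ge0 rh_ge0 F_monotone; move: gy_subgrad.
by rewrite dotpBl !dotpDl !dotpZl !dotpBr; lra.
Qed.

Lemma noise_bound : nsq (Dt - D) + nsq v <= 4 * Sf + 4 * rh ^+ 2 * SF.
Proof.
have := nsqB_le2 Dt D; have := nsq_noise_le wf ef wF eF rh.
have := nsq_direction_le gx Fx wft eft wFt eFt rh.
have := nsq_direction_le gy Fy wf ef wF eF rh.
have := ler_wpM2l (sqr_ge0 rh) Fx_le; have := ler_wpM2l (sqr_ge0 rh) Fy_le.
move: gx_le gy_le; lra.
Qed.

Lemma extragradient_step_bound :
  2 * c * (rh * dotp Fz (y1 - z) + (fy - fz))
  <= nsq (xk - z) - nsq (x1 - z) + nsq (uk - z) - nsq (u1 - z)
     + c ^+ 2 * (4 * Sf + 4 * rh ^+ 2 * SF) + 2 * c * dotp v (uk - y1).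
Proof.
have := extragradient_dist_le y_step x_step; have := proj_step_dist_le u_step.
have := ler_wpM2l (ltW (mulr_gt0 (ltr0n R 2) c_gt0)) direction_lower_bound.
have := ler_wpM2l (sqr_ge0 c) noise_bound.
lra.
Qed.

End ExtragradientStep.

Lemma powR_rescale (R : realType) (n gm rh r a b dist Sf SF q : R) :
  0 < n -> 0 < gm -> 0 < rh ->
  2 * (n^-1 * gm) * (rh * a + b)
    <= dist + (n^-1 * gm) ^+ 2 * (4 * Sf + 4 * rh ^+ 2 * SF)
       + 2 * (n^-1 * gm) * q ->
  (gm * rh) `^ r * a + (gm * rh) `^ r / rh * b
    <= 2^-1 * n * (gm * rh) `^ (r - 1) * dist
       + 2 / n * (gm * rh) `^ (r + 1) / rh ^+ 2 * Sf
       + 2 / n * (gm * rh) `^ (r + 1) * SF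
       + gm `^ r * rh `^ (r - 1) * q.
Proof.
move=> n_gt0 gm_gt0 rh_gt0 step.
set c := n^-1 * gm in step *.
have powR_subr1 x : 0 < x -> x `^ (r - 1) = x `^ r / x.
  by move=> x_gt0; rewrite powRB ?(gt_eqF x_gt0) ?implybT // powRr1 // ltW.
have powR_addr1 x : 0 < x -> x `^ (r + 1) = x `^ r * x.
  by move=> x_gt0; rewrite powRD ?(gt_eqF x_gt0) ?implybT // powRr1 // ltW.
have gr_gt0 : 0 < gm * rh by rewrite mulr_gt0.
rewrite !powR_subr1 ?powR_addr1 // [gm `^ r * _]mulrA.
rewrite -(powRM _ (ltW gm_gt0) (ltW rh_gt0)).
have k_ge0 : 0 <= (gm * rh) `^ r / (2 * c * rh).
  by rewrite divr_ge0 ?powR_ge0 // ltW // !mulr_gt0 // invr_gt0.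
rewrite -subr_ge0 (_ : _ - _ = (gm * rh) `^ r / (2 * c * rh) * (dist
    + c ^+ 2 * (4 * Sf + 4 * rh ^+ 2 * SF) + 2 * c * q - 2 * c * (rh * a + b))).
  by rewrite mulr_ge0 // subr_ge0.
by rewrite /c; field; rewrite !gt_eqF.
Qed.

Theorem lemma6
  (R : realType) (N : nat) (hN : (0 < N)%N)
  (ns : 'I_N -> nat) (hns : forall i, (0 < ns i)%N) (d : nat)
  (Xb : forall i : 'I_N, set ('I_(ns i) -> R))
  (X := prodset Xb)
  (F : (bidx ns -> R) -> (bidx ns -> R)) (f : (bidx ns -> R) -> R)
  (DF Df : set (bidx ns -> R))
  (Fs : (bidx ns -> R) -> 'rV[R]_d -> (bidx ns -> R))
  (g : (bidx ns -> R) -> (bidx ns -> R))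
  (gs : (bidx ns -> R) -> 'rV[R]_d -> (bidx ns -> R))
  (CF Cf r : R) (gam rho : nat -> R)
  (it ik : nat -> 'I_N) (xit xis : nat -> 'rV[R]_d)
  (x y u : nat -> bidx ns -> R)
  (* problem assumption *)
  (HFcont : continuous_on DF F) (HFmono : monotone_on DF F)
  (Hfcvx : convex_on Df f)
  (HXint : X `<=` interior_of (DF `&` Df))
  (HXne : exists z, X z) (HXcomp : compact_set X) (HXcvx : convex_set X)
  (HXb : forall i, closed_set (Xb i) /\ convex_set (Xb i))
  (HCF : 0 < CF) (HCf : 0 < Cf)
  (HFbd : forall z, X z -> nrm (F z) <= CF)
  (Hfbd : forall z, X z -> forall s, subgrad Df f z s -> nrm s <= Cf)
  (* \tilde\nabla f(z) is a subgradient of f at z *)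
  (Hg : forall z, X z -> subgrad Df f z (g z))
  (* algorithm parameters *)
  (Hgam : forall k, 0 < gam k) (Hrho : forall k, 0 < rho k) (Hr : r < 1)
  (Hx0 : X (x 0%N)) (Hy0 : X (y 0%N))
  (Hy : forall k i,
     if i == it k then
       is_proj (Xb i)
         (blk i (x k - scl (gam k) (gs (x k) (xit k) + scl (rho k) (Fs (x k) (xit k)))))
         (blk i (y k.+1))
     else blk i (y k.+1) = blk i (x k))
  (Hx : forall k i,
     if i == ik k then
       is_proj (Xb i)
         (blk i (x k - scl (gam k) (gs (y k.+1) (xis k) + scl (rho k) (Fs (y k.+1) (xis k)))))
         (blk i (x k.+1))
     else blk i (x k.+1) = blk i (x k))
  (* errors *)
  (wFt := fun k => Fs (x k) (xit k) - F (x k))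
  (wft := fun k => gs (x k) (xit k) - g (x k))
  (wF := fun k => Fs (y k.+1) (xis k) - F (y k.+1))
  (wf := fun k => gs (y k.+1) (xis k) - g (y k.+1))
  (eFt := fun k => scl N%:R (blkmask (it k) (Fs (x k) (xit k))) - Fs (x k) (xit k))
  (eft := fun k => scl N%:R (blkmask (it k) (gs (x k) (xit k))) - gs (x k) (xit k))
  (eF := fun k => scl N%:R (blkmask (ik k) (Fs (y k.+1) (xis k))) - Fs (y k.+1) (xis k))
  (ef := fun k => scl N%:R (blkmask (ik k) (gs (y k.+1) (xis k))) - gs (y k.+1) (xis k))
  (* auxiliary sequence *)
  (Hu0 : u 0%N = x 0%N)
  (Hu : forall k,
     is_proj X
       (u k + scl (N%:R^-1 * gam k)
                 (wf k + ef k + scl (rho k) (wF k) + scl (rho k) (eF k)))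
       (u k.+1)) :
  forall (z : bidx ns -> R) (k : nat), X z ->
    (gam k * rho k) `^ r * dotp (F z) (y k.+1 - z)
      + (gam k * rho k) `^ r / rho k * (f (y k.+1) - f z)
    <= 2^-1 * N%:R * (gam k * rho k) `^ (r - 1)
         * (nsq (x k - z) - nsq (x k.+1 - z) + nsq (u k - z) - nsq (u k.+1 - z))
       + 2 / N%:R * (gam k * rho k) `^ (r + 1) / rho k ^+ 2
         * (6 * Cf ^+ 2 + 3 * nsq (wft k) + 3 * nsq (eft k)
            + 4 * nsq (wf k) + 4 * nsq (ef k))
       + 2 / N%:R * (gam k * rho k) `^ (r + 1)
         * (6 * CF ^+ 2 + 3 * nsq (wFt k) + 3 * nsq (eFt k)
            + 4 * nsq (wF k) + 4 * nsq (eF k))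
       + gam k `^ r * rho k `^ (r - 1)
         * dotp (wf k + ef k + scl (rho k) (wF k) + scl (rho k) (eF k)) (u k - y k.+1).
Proof.
move=> z k Xz.
have Xb_cvx i : convex_set (Xb i) := (HXb i).2.
have X_dom w : X w -> DF w /\ Df w := fun Xw => interior_ofW w (HXint w Xw).
have Xx j : X (x j).
  by elim: j => [|j IHj]; [exact: Hx0 | exact: block_step_mem (Hx j) IHj].
have Xy : X (y k.+1) := block_step_mem (Hy k) (Xx k).
have x_step := block_step_vi Xb_cvx (Hx k) Xz.
have y_step := block_step_vi Xb_cvx (Hy k) (Xx k.+1).
rewrite -(corrected_direction _ _ _ (g (y k.+1)) (F (y k.+1)) _ _ hN) in x_step.
rewrite -(corrected_direction _ _ _ (g (x k)) (F (x k)) _ _ hN) in y_step.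
apply: powR_rescale; rewrite ?ltr0n //.
apply: (extragradient_step_bound _ (ltW (Hrho k)) y_step x_step
          (is_proj_vi HXcvx (Hu k) Xz)).
- by rewrite mulr_gt0 ?invr_gt0 ?ltr0n.
- exact: Hg _ Xy _ (X_dom _ Xz).2.
- exact: HFmono _ _ (X_dom _ Xy).1 (X_dom _ Xz).1.
- exact: nsq_le_sqr (Hfbd _ (Xx k) _ (Hg _ (Xx k))).
- exact: nsq_le_sqr (Hfbd _ Xy _ (Hg _ Xy)).
- exact: nsq_le_sqr (HFbd _ (Xx k)).
- exact: nsq_le_sqr (HFbd _ Xy).
Qed.
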